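(* For $\eta>0$ let $\Gamma$ be the boundary of the rectangle with vertices $\pm3\pm\mathbf i\eta/2$, traversed counterclockwise. Then $$\operatorname{Im}\Big[\oint_\Gamma m_0(z)m_0(z+\mathbf i\eta)\big(m_0(z+\mathbf i\eta)-m_0(z)\big)\,dz\Big]=2\pi+o(1)\quad\text{as }\eta\to0.$$
   Context: $m_0(z)=\int\frac{\rho(x)}{x-z}dx=\frac{-z+\sqrt{z^2-4}}2$ is the Stieltjes transform of the semicircle density $\rho(x)=\frac1{2\pi}\sqrt{4-x^2}\,\mathbb 1\{|x|\le2\}$, defined for $z\in\mathbb C\setminus[-2,2]$ (branch cut on $[-2,2]$, $\sqrt{z^2-4}\sim z$ as $|z|\to\infty$). *)

From Stdlib Require Import Reals.
From Coquelicot Require Import Coquelicot.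
Open Scope R_scope.

Definition rho (x : R) : R := sqrt (4 - x ^ 2) / (2 * PI).

Definition CRInt (f : R -> C) (a b : R) : C :=
  @RInt C_R_CompleteNormedModule f a b.

Definition m0 (z : C) : C :=
  CRInt (fun x => (RtoC (rho x) / (RtoC x - z))%C) (-2) 2.

Definition seg_integral (f : C -> C) (p q : C) : C :=
  CRInt (fun t => (f (p + RtoC t * (q - p)) * (q - p))%C) 0 1.

Definition rect_integral (f : C -> C) (a h : R) : C :=
  let v1 := (RtoC (-a) - Ci * RtoC h)%C in
  let v2 := (RtoC a - Ci * RtoC h)%C in
  let v3 := (RtoC a + Ci * RtoC h)%C in
  let v4 := (RtoC (-a) + Ci * RtoC h)%C in
  (seg_integral f v1 v2 + seg_integral f v2 v3
   + seg_integral f v3 v4 + seg_integral f v4 v1)%C.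

Definition integrand (eta : R) (z : C) : C :=
  (m0 z * m0 (z + Ci * RtoC eta) * (m0 (z + Ci * RtoC eta) - m0 z))%C.

(** For [z] off the cut, substituting [x = 2 cos t] and summing the geometric kernel
    [sum_n q^|n| e^(i n t)] shows that [m0 z] is the root of [m^2 + z m + 1 = 0] of modulus
    less than 1.  This quadratic equation controls everything else: [m0] is locally Lipschitz
    off the cut (so the integrand is continuous on the contour), [|m0| <= 1], and roots in the
    closed upper half disk satisfy [|m - m'|^2 <= |z - z'|].  On the rectangle, the vertical
    sides have length [eta] and a bounded integrand, and on the upper side [m0 z] and
    [m0 (z + i eta)] are [sqrt eta]-close.  On the lower side [z + i eta = conj z], so the
    integrand is [2 i |m|^2 Im m] with [m = m0 (x + i eta/2)], which is [sqrt eta]-close to the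
    boundary value [m0 (x + i0)], whose [|m|^2 Im m] is [sqrt (4 - x^2) / 2].  Hence the
    imaginary part is [int_{-3}^{3} sqrt (4 - x^2) dx + O (sqrt eta) = 2 pi + O (sqrt eta)]. *)

From Stdlib Require Import Reals Lra Psatz.
From Coquelicot Require Import Coquelicot.
Open Scope R_scope.

Local Notation Cderive f x l := (@is_derive R_AbsRing C_R_NormedModule f x l).
Local Notation Ccontinuous f x := (@continuous R_UniformSpace C_UniformSpace f x).

(** * Complex-valued functions of a real variable *)

Lemma fst_le_Cmod (c : C) : Rabs (fst c) <= Cmod c.
Proof. eapply Rle_trans; [|apply Rmax_Cmod]. apply Rmax_l. Qed.

Lemma snd_le_Cmod (c : C) : Rabs (snd c) <= Cmod c.
Proof. eapply Rle_trans; [|apply Rmax_Cmod]. apply Rmax_r. Qed.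

Lemma is_derive_eq (F : R -> R) x (L L' : R) : is_derive F x L -> L = L' -> is_derive F x L'.
Proof. now intros H <-. Qed.

Lemma Cderive_eq (F : R -> C) x (L L' : C) : Cderive F x L -> L = L' -> Cderive F x L'.
Proof. now intros H <-. Qed.

Lemma Cderive_fst (f : R -> C) x l : Cderive f x l -> is_derive (fun t => fst (f t)) x (fst l).
Proof.
  intros H. apply (filterdiff_comp' (U:=R_NormedModule) (V:=C_R_NormedModule) (W:=R_NormedModule)
     f (fun c : C => fst c) x _ (fun c : C => fst c) H).
  apply filterdiff_linear, (is_linear_fst (K:=R_AbsRing) (U:=R_NormedModule) (V:=R_NormedModule)).
Qed.

Lemma Cderive_snd (f : R -> C) x l : Cderive f x l -> is_derive (fun t => snd (f t)) x (snd l).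
Proof.
  intros H. apply (filterdiff_comp' (U:=R_NormedModule) (V:=C_R_NormedModule) (W:=R_NormedModule)
     f (fun c : C => snd c) x _ (fun c : C => snd c) H).
  apply filterdiff_linear, (is_linear_snd (K:=R_AbsRing) (U:=R_NormedModule) (V:=R_NormedModule)).
Qed.

Lemma Cderive_of_components (f : R -> C) x l :
  is_derive (fun t => fst (f t)) x (fst l) -> is_derive (fun t => snd (f t)) x (snd l) ->
  Cderive f x l.
Proof.
  intros Hre Him.
  assert (H : Cderive (fun t => ((fst (f t), snd (f t)) : C)) x ((fst l, snd l) : C)).
  { apply (filterdiff_comp'_2 (V:=R_NormedModule) (W:=C_R_NormedModule)
      _ _ (fun u v => ((u, v) : C)) x _ _ (fun u v => ((u, v) : C)) Hre Him).
    apply filterdiff_linear.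
    apply (is_linear_prod (K:=R_AbsRing) (T:=prod_NormedModule R_AbsRing R_NormedModule R_NormedModule)
      (U:=R_NormedModule) (V:=R_NormedModule)).
    - apply is_linear_fst.
    - apply is_linear_snd. }
  destruct l. apply (is_derive_ext (fun t => ((fst (f t), snd (f t)) : C))); [|exact H].
  intros t; now destruct (f t).
Qed.

Lemma Cderive_plus (f g : R -> C) x lf lg : Cderive f x lf -> Cderive g x lg ->
  Cderive (fun t => (f t + g t)%C) x (lf + lg)%C.
Proof. apply (is_derive_plus f g). Qed.

Lemma Cderive_minus (f g : R -> C) x lf lg : Cderive f x lf -> Cderive g x lg ->
  Cderive (fun t => (f t - g t)%C) x (lf - lg)%C.
Proof. apply (is_derive_minus f g). Qed.

Lemma Cderive_mult (f g : R -> C) x lf lg : Cderive f x lf -> Cderive g x lg ->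
  Cderive (fun t => (f t * g t)%C) x (lf * g x + f x * lg)%C.
Proof.
  intros Hf Hg.
  pose proof (Cderive_fst _ _ _ Hf) as f1. pose proof (Cderive_snd _ _ _ Hf) as f2.
  pose proof (Cderive_fst _ _ _ Hg) as g1. pose proof (Cderive_snd _ _ _ Hg) as g2.
  apply Cderive_of_components; simpl; eapply is_derive_eq.
  - apply (is_derive_minus (fun t => fst (f t) * fst (g t)) (fun t => snd (f t) * snd (g t))).
    + exact (Derive.is_derive_mult _ _ _ _ _ f1 g1).
    + exact (Derive.is_derive_mult _ _ _ _ _ f2 g2).
  - unfold minus, plus, opp; simpl. ring.
  - apply (is_derive_plus (fun t => fst (f t) * snd (g t)) (fun t => snd (f t) * fst (g t))).
    + exact (Derive.is_derive_mult _ _ _ _ _ f1 g2).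
    + exact (Derive.is_derive_mult _ _ _ _ _ f2 g1).
  - unfold plus; simpl. ring.
Qed.

Lemma Cderive_const (c : C) x : Cderive (fun _ => c) x (RtoC 0).
Proof. apply (is_derive_const (K:=R_AbsRing) (V:=C_R_NormedModule)). Qed.

Lemma Cderive_scal (c : C) (f : R -> C) x l : Cderive f x l -> Cderive (fun t => (c * f t)%C) x (c * l)%C.
Proof.
  intros H. eapply Cderive_eq; [apply Cderive_mult; [apply Cderive_const | exact H]|].
  apply injective_projections; simpl; ring.
Qed.

Lemma Cderive_RtoC (f : R -> R) x l : is_derive f x l -> Cderive (fun t => RtoC (f t)) x (RtoC l).
Proof.
  intros H. apply Cderive_of_components; [exact H|]. simpl.
  apply (is_derive_const (K:=R_AbsRing) (V:=R_NormedModule)).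
Qed.

Lemma continuous_C_fst (f : R -> C) x : Ccontinuous f x -> continuous (fun t => fst (f t)) x.
Proof.
  intros H. apply (continuous_comp (V:=C_UniformSpace) f (fun c : C => fst c) x H).
  apply (continuous_fst (U:=R_UniformSpace) (V:=R_UniformSpace)).
Qed.

Lemma continuous_C_snd (f : R -> C) x : Ccontinuous f x -> continuous (fun t => snd (f t)) x.
Proof.
  intros H. apply (continuous_comp (V:=C_UniformSpace) f (fun c : C => snd c) x H).
  apply (continuous_snd (U:=R_UniformSpace) (V:=R_UniformSpace)).
Qed.

Lemma continuous_C_of_components (f : R -> C) x :
  continuous (fun t => fst (f t)) x -> continuous (fun t => snd (f t)) x -> Ccontinuous f x.
Proof.
  intros Hre Him.
  eapply (continuous_ext (T:=R_UniformSpace) (U:=C_UniformSpace) (fun t => (fst (f t), snd (f t)))).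
  { intros t; now destruct (f t). }
  apply (continuous_comp_2 (W:=R_UniformSpace) (X:=C_UniformSpace) _ _ (fun u v => ((u, v) : C)) x Hre Him).
  apply (continuous_ext (T:=prod_UniformSpace R_UniformSpace R_UniformSpace) (U:=C_UniformSpace) (fun p => p)).
  - now intros [].
  - apply (continuous_id (U:=C_UniformSpace)).
Qed.

Lemma continuous_Cmult (f g : R -> C) x : Ccontinuous f x -> Ccontinuous g x ->
  Ccontinuous (fun t => (f t * g t)%C) x.
Proof.
  intros Hf Hg.
  pose proof (continuous_C_fst _ _ Hf). pose proof (continuous_C_snd _ _ Hf).
  pose proof (continuous_C_fst _ _ Hg). pose proof (continuous_C_snd _ _ Hg).
  apply continuous_C_of_components; simpl.
  - apply (continuous_minus (V:=R_NormedModule)); apply (continuous_mult (K:=R_AbsRing)); assumption.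
  - apply (continuous_plus (V:=R_NormedModule)); apply (continuous_mult (K:=R_AbsRing)); assumption.
Qed.

Lemma continuous_Cminus (f g : R -> C) x : Ccontinuous f x -> Ccontinuous g x ->
  Ccontinuous (fun t => (f t - g t)%C) x.
Proof. apply (continuous_minus (V:=C_R_NormedModule) f g). Qed.

Lemma continuous_RtoC (f : R -> R) x : continuous f x -> Ccontinuous (fun t => RtoC (f t)) x.
Proof. intros H. apply continuous_C_of_components; [exact H | apply continuous_const]. Qed.

Lemma continuous_pow_comp (f : R -> R) x n : continuous f x -> continuous (fun t => f t ^ n) x.
Proof.
  intros H. induction n as [|n IH]; simpl.
  - apply continuous_const.
  - apply (continuous_mult (K:=R_AbsRing)); assumption.
Qed.

Lemma continuous_Cinv (f : R -> C) x : Ccontinuous f x -> f x <> 0%C -> Ccontinuous (fun t => (/ f t)%C) x.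
Proof.
  intros Hf Hn.
  pose proof (continuous_C_fst _ _ Hf). pose proof (continuous_C_snd _ _ Hf).
  assert (Hsq : continuous (fun t => fst (f t) ^ 2 + snd (f t) ^ 2) x).
  { apply (continuous_plus (V:=R_NormedModule)); apply continuous_pow_comp; assumption. }
  assert (Hsq0 : fst (f x) ^ 2 + snd (f x) ^ 2 <> 0).
  { intros Hc. apply Hn. apply injective_projections; simpl; nra. }
  apply continuous_C_of_components; cbn [Cinv fst snd].
  - apply (continuous_mult (K:=R_AbsRing)); [assumption|].
    apply continuous_Rinv_comp; assumption.
  - apply (continuous_mult (K:=R_AbsRing)); [apply (continuous_opp (V:=R_NormedModule)); assumption|].
    apply continuous_Rinv_comp; assumption.
Qed.

Lemma continuous_Cdiv (f g : R -> C) x : Ccontinuous f x -> Ccontinuous g x -> g x <> 0%C ->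
  Ccontinuous (fun t => (f t / g t)%C) x.
Proof. intros. apply continuous_Cmult; [|apply continuous_Cinv]; assumption. Qed.

Lemma continuous_C_epsilon_delta (f : R -> C) t0 :
  (forall eps, 0 < eps -> exists delta, 0 < delta /\
     forall t, Rabs (t - t0) < delta -> Cmod (f t - f t0) < eps) ->
  Ccontinuous f t0.
Proof.
  intros H.
  apply continuous_C_of_components; apply continuity_pt_filterlim; intros eps Heps;
    destruct (H eps Heps) as [delta [Hdelta Ht]]; exists delta; split; try exact Hdelta;
    intros t [_ Hlt]; specialize (Ht t Hlt); eapply Rle_lt_trans; try exact Ht.
  - change (Rabs (fst (f t) - fst (f t0)) <= Cmod (f t - f t0)).
    replace (fst (f t) - fst (f t0)) with (fst (f t - f t0)%C) by (simpl; ring). apply fst_le_Cmod.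
  - change (Rabs (snd (f t) - snd (f t0)) <= Cmod (f t - f t0)).
    replace (snd (f t) - snd (f t0)) with (snd (f t - f t0)%C) by (simpl; ring). apply snd_le_Cmod.
Qed.

(** * The Stieltjes transform solves [m^2 + z m + 1 = 0] *)
Definition cis (t : R) : C := (cos t, sin t).

Lemma cos_sq_add_sin_sq t : cos t ^ 2 + sin t ^ 2 = 1.
Proof. rewrite <- (sin2_cos2 t); unfold Rsqr; ring. Qed.

Lemma cis_opp t : cis (- t) = (/ cis t)%C.
Proof.
  unfold cis, Cinv; cbn [fst snd]. rewrite cos_neg, sin_neg, cos_sq_add_sin_sq.
  apply injective_projections; cbn [fst snd]; field.
Qed.

Lemma Cmod_cis t : Cmod (cis t) = 1.
Proof. unfold Cmod, cis; cbn [fst snd]. rewrite cos_sq_add_sin_sq. apply sqrt_1. Qed.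

Lemma cis_neq_0 t : cis t <> 0%C.
Proof. intros H. pose proof (Cmod_cis t) as H1. rewrite H, Cmod_0 in H1. lra. Qed.

Lemma RtoC_2_cos t : RtoC (2 * cos t) = (cis t + / cis t)%C.
Proof.
  rewrite <- cis_opp. unfold cis. rewrite cos_neg, sin_neg.
  apply injective_projections; simpl; ring.
Qed.

Lemma RtoC_4_sin_sq t : RtoC (4 * sin t ^ 2) = (- ((cis t - / cis t) * (cis t - / cis t)))%C.
Proof.
  rewrite <- cis_opp. unfold cis. rewrite cos_neg, sin_neg.
  apply injective_projections; simpl; ring.
Qed.

Lemma Cderive_cis x : Cderive cis x (Ci * cis x)%C.
Proof.
  apply Cderive_of_components; simpl; eapply is_derive_eq;
    [apply is_derive_cos | ring | apply is_derive_sin | ring].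
Qed.

Lemma Cderive_cis_opp x : Cderive (fun t => cis (- t)) x (- (Ci * cis (- x)))%C.
Proof.
  eapply Cderive_eq.
  - apply (is_derive_comp cis Ropp); [apply Cderive_cis|].
    apply (is_derive_opp (K:=R_AbsRing) (fun t => t) x 1 (is_derive_id x)).
  - rewrite scal_R_Cmult. unfold opp; simpl. apply injective_projections; simpl; ring.
Qed.

Lemma Re_one_minus_cis_pos (q : C) t : Cmod q < 1 -> 0 < fst (1 - q * cis t)%C.
Proof.
  intros Hq. pose proof (fst_le_Cmod (q * cis t)) as H.
  rewrite Cmod_mult, Cmod_cis, Rmult_1_r in H.
  replace (fst (1 - q * cis t)%C) with (1 - fst (q * cis t)%C) by (simpl; ring).
  apply Rabs_le_between in H. lra.
Qed.

Lemma one_minus_cis_neq_0 (q : C) t : Cmod q < 1 -> (1 - q * cis t)%C <> 0%C.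
Proof. intros Hq E. pose proof (Re_one_minus_cis_pos q t Hq) as H. rewrite E in H. simpl in H. lra. Qed.

(** The principal logarithm on the right half-plane [0 < Re w]. *)
Definition Clog_rhp (w : C) : C := (ln (fst w ^ 2 + snd w ^ 2) / 2, atan (snd w / fst w)).

Lemma Cderive_Clog_rhp (w : R -> C) x l : Cderive w x l -> 0 < fst (w x) ->
  Cderive (fun t => Clog_rhp (w t)) x (l / w x)%C.
Proof.
  intros H Hpos.
  pose proof (Cderive_fst _ _ _ H) as u1. pose proof (Cderive_snd _ _ _ H) as v1.
  assert (Hn : fst (w x) ^ 2 + snd (w x) ^ 2 > 0) by nra.
  assert (HF : is_derive (fun t => fst (w t) ^ 2 + snd (w t) ^ 2) x
                 (2 * fst (w x) * fst l + 2 * snd (w x) * snd l)).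
  { eapply is_derive_eq.
    - apply (is_derive_plus (fun t => fst (w t) ^ 2) (fun t => snd (w t) ^ 2));
        apply is_derive_pow; eassumption.
    - unfold plus; simpl. ring. }
  apply Cderive_of_components; simpl; eapply is_derive_eq.
  - apply (is_derive_ext (fun t => / 2 * ln (fst (w t) ^ 2 + snd (w t) ^ 2))).
    { intros t; simpl. field. }
    apply is_derive_scal, (is_derive_comp ln); [apply is_derive_ln; exact Hn | exact HF].
  - unfold scal; simpl; unfold mult; simpl. field. lra.
  - apply (is_derive_comp atan (fun t => snd (w t) / fst (w t))); [apply is_derive_atan|].
    apply is_derive_div; [exact v1 | exact u1 | lra].
  - unfold scal; simpl; unfold mult; simpl. unfold Rsqr. field. split; nra.
Qed.

(** [sum_n q^|n| e^(i n t)] in closed form.  Its primitive may use [Clog_rhp] because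
    [Re (1 - q e^(i t)) > 0] for [|q| < 1]. *)
Definition geometric_kernel (q : C) (t : R) : C :=
  (1 + q * cis t / (1 - q * cis t) + q * cis (- t) / (1 - q * cis (- t)))%C.

Definition geometric_kernel_primitive (q : C) (t : R) : C :=
  (RtoC t + Ci * Clog_rhp (1 - q * cis t) - Ci * Clog_rhp (1 - q * cis (- t)))%C.

Lemma Cderive_geometric_kernel_primitive (q : C) t : Cmod q < 1 ->
  Cderive (geometric_kernel_primitive q) t (geometric_kernel q t).
Proof.
  intros Hq.
  assert (D1 : Cderive (fun s => 1 - q * cis s)%C t (- (q * (Ci * cis t)))%C).
  { eapply Cderive_eq; [apply Cderive_minus; [apply Cderive_const | apply Cderive_scal, Cderive_cis]|].
    apply injective_projections; simpl; ring. }
  assert (D2 : Cderive (fun s => 1 - q * cis (- s))%C t (q * (Ci * cis (- t)))%C).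
  { eapply Cderive_eq; [apply Cderive_minus; [apply Cderive_const | apply Cderive_scal, Cderive_cis_opp]|].
    apply injective_projections; simpl; ring. }
  pose proof (Re_one_minus_cis_pos q t Hq) as P1.
  pose proof (Re_one_minus_cis_pos q (- t) Hq) as P2.
  eapply Cderive_eq.
  - apply Cderive_minus; [apply Cderive_plus|].
    + apply Cderive_RtoC, is_derive_id.
    + apply Cderive_scal, Cderive_Clog_rhp; [exact D1 | exact P1].
    + apply Cderive_scal, Cderive_Clog_rhp; [exact D2 | exact P2].
  - unfold geometric_kernel, Cdiv. cbv beta. change (RtoC one) with (RtoC 1).
    generalize (/ (1 - q * cis t))%C (/ (1 - q * cis (- t)))%C (cis t) (cis (- t)).
    intros [] [] [] []. destruct q. apply injective_projections; simpl; ring.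
Qed.

Lemma geometric_kernel_primitive_0 (q : C) : geometric_kernel_primitive q 0 = 0%C.
Proof. unfold geometric_kernel_primitive. rewrite Ropp_0. ring. Qed.

Lemma geometric_kernel_primitive_PI (q : C) : geometric_kernel_primitive q PI = RtoC PI.
Proof.
  unfold geometric_kernel_primitive.
  replace (cis (- PI)) with (cis PI); [ring|].
  unfold cis. now rewrite cos_neg, sin_neg, sin_PI, Ropp_0.
Qed.

Definition off_cut (z : C) : Prop := snd z <> 0 \/ 2 < Rabs (fst z).

Lemma off_cut_sub_neq_0 (z : C) x : off_cut z -> -2 <= x <= 2 -> (RtoC x - z)%C <> 0%C.
Proof.
  intros [Hz|Hz] Hx E.
  - apply Hz. replace (snd z) with (- snd (RtoC x - z)%C) by (simpl; ring). rewrite E. simpl. ring.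
  - replace (fst z) with (x - fst (RtoC x - z)%C) in Hz by (simpl; ring). rewrite E in Hz. simpl in Hz.
    rewrite Rminus_0_r in Hz. apply Rabs_le in Hx. lra.
Qed.

Lemma off_cut_cos_sub_neq_0 (z : C) t : off_cut z -> (RtoC (2 * cos t) - z)%C <> 0%C.
Proof. intros Hz. apply off_cut_sub_neq_0; [exact Hz|]. pose proof (COS_bound t). lra. Qed.

Definition is_m0_root (z m : C) : Prop := (m * m + z * m + 1 = 0)%C /\ Cmod m < 1.

Lemma quadratic_root_neq_0 (z m : C) : (m * m + z * m + 1 = 0)%C -> m <> 0%C.
Proof. intros H E. rewrite E in H. apply C1_nz. rewrite <- H. ring. Qed.

Lemma geometric_kernel_partial_fractions (q : C) t : Cmod q < 1 -> q <> 0%C ->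
  (RtoC (2 * cos t) - (q + / q))%C <> 0%C ->
  (RtoC (4 * sin t ^ 2) / (RtoC (2 * cos t) - (q + / q)))%C =
  ((1 - q * q) / q * geometric_kernel q t - RtoC (2 * cos t) - (q + / q))%C.
Proof.
  intros Hq1 Hq0 Hden.
  pose proof (one_minus_cis_neq_0 q t Hq1) as N1.
  pose proof (one_minus_cis_neq_0 q (- t) Hq1) as N2.
  unfold geometric_kernel. rewrite cis_opp in *. rewrite RtoC_2_cos in *. rewrite RtoC_4_sin_sq.
  pose proof (cis_neq_0 t) as He. set (e := cis t) in *.
  field. cbv beta.
  repeat split; [exact Hq0 | exact He | | exact N1 |].
  - intros h. apply N2.
    transitivity ((e - q) / e)%C; [field; auto|].
    rewrite h. field; auto.
  - intros h. apply Hden.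
    transitivity (((e * e + 1) * q - (q * q + 1) * e) / (e * q))%C; [field; auto|].
    rewrite h. field; auto.
Qed.

Lemma continuous_semicircle_cos_integrand (z : C) t : off_cut z ->
  Ccontinuous (fun s => (RtoC (2 * sin s ^ 2 / PI) / (RtoC (2 * cos s) - z))%C) t.
Proof.
  intros Hz. apply continuous_Cdiv; [| apply continuous_Cminus | apply off_cut_cos_sub_neq_0, Hz].
  - apply continuous_RtoC, (ex_derive_continuous (V:=R_NormedModule)). auto_derive. trivial.
  - apply continuous_RtoC, (ex_derive_continuous (V:=R_NormedModule)). auto_derive. trivial.
  - apply continuous_const.
Qed.

(** With [q = -m] (so [z = q + 1/q]), partial fractions turn the integrand into
    [((1 - q^2)/q * geometric_kernel q t - 2 cos t - z) / (2 pi)], which has an explicit primitive. *)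
Lemma is_RInt_semicircle_cos (z m : C) : off_cut z -> is_m0_root z m ->
  is_RInt (fun t => (RtoC (2 * sin t ^ 2 / PI) / (RtoC (2 * cos t) - z))%C) 0 PI m.
Proof.
  intros Hz [Hm Hm1].
  pose proof (quadratic_root_neq_0 z m Hm) as Hm0.
  set (q := (- m)%C).
  assert (Hq1 : Cmod q < 1) by (unfold q; now rewrite Cmod_opp).
  assert (Hq0 : q <> 0%C).
  { unfold q. intros E. apply Hm0. transitivity (- - m)%C; [ring|]. rewrite E. ring. }
  assert (Hzq : z = (q + / q)%C).
  { transitivity (z - (m * m + z * m + 1) / m)%C; [rewrite Hm; field; auto|].
    unfold q. field. auto. }
  set (c := ((1 - q * q) / q)%C).
  set (G := fun t => (RtoC (/ (2 * PI)) *
                       (c * geometric_kernel_primitive q t - RtoC (2 * sin t) - z * RtoC t))%C).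
  replace m with (G PI - G 0)%C.
  2: { unfold G. rewrite geometric_kernel_primitive_0, geometric_kernel_primitive_PI, sin_PI, sin_0, Rmult_0_r.
       assert (Hpi : (RtoC (/ (2 * PI)) * RtoC PI = / 2)%C).
       { apply injective_projections; simpl; field; pose proof PI_RGT_0; lra. }
       transitivity ((c - z) * (RtoC (/ (2 * PI)) * RtoC PI))%C; [ring|].
       rewrite Hpi, Hzq. unfold c, q. field. exact Hm0. }
  apply (is_RInt_derive (V:=C_R_CompleteNormedModule) G); intros t _.
  - pose proof (geometric_kernel_partial_fractions q t Hq1 Hq0) as PF.
    rewrite <- Hzq in PF. fold c in PF.
    specialize (PF (off_cut_cos_sub_neq_0 z t Hz)).
    eapply Cderive_eq.
    + apply Cderive_scal, Cderive_minus; [apply Cderive_minus|].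
      * apply Cderive_scal, Cderive_geometric_kernel_primitive, Hq1.
      * apply Cderive_RtoC, is_derive_scal, is_derive_sin.
      * apply Cderive_scal, Cderive_RtoC, is_derive_id.
    + change (RtoC one) with (RtoC 1).
      replace (c * geometric_kernel q t - RtoC (2 * cos t) - z * RtoC 1)%C
        with (c * geometric_kernel q t - RtoC (2 * cos t) - z)%C by ring.
      rewrite <- PF. unfold Cdiv.
      generalize (/ (RtoC (2 * cos t) - z))%C. intros [u v].
      apply injective_projections; simpl; field; pose proof PI_RGT_0; lra.
  - apply continuous_semicircle_cos_integrand, Hz.
Qed.

Lemma rho_2_cos t : 0 <= sin t -> rho (2 * cos t) = 2 * sin t / (2 * PI).
Proof.
  intros H. unfold rho. f_equal.
  replace (4 - (2 * cos t) ^ 2) with ((2 * sin t) ^ 2) by (pose proof (cos_sq_add_sin_sq t); nra).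
  apply sqrt_pow2. lra.
Qed.

Lemma continuous_rho x : continuous rho x.
Proof.
  unfold rho, Rdiv. apply (continuous_mult (K:=R_AbsRing)); [|apply continuous_const].
  apply continuous_sqrt_comp, (ex_derive_continuous (V:=R_NormedModule)). auto_derive. trivial.
Qed.

Lemma m0_cos_substitution (z : C) : off_cut z ->
  m0 z = CRInt (fun t => (RtoC (2 * sin t ^ 2 / PI) / (RtoC (2 * cos t) - z))%C) 0 PI.
Proof.
  intros Hz.
  set (f := fun x => (RtoC (rho x) / (RtoC x - z))%C).
  set (h := fun t => (RtoC (2 * sin t ^ 2 / PI) / (RtoC (2 * cos t) - z))%C).
  assert (Hfc : forall x, -2 <= x <= 2 -> Ccontinuous f x).
  { intros x Hx. apply continuous_Cdiv; [apply continuous_RtoC, continuous_rho| |].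
    - apply continuous_Cminus; [apply continuous_RtoC, continuous_id | apply continuous_const].
    - apply off_cut_sub_neq_0; [exact Hz | exact Hx]. }
  assert (Hf : ex_RInt (V:=C_R_CompleteNormedModule) f 2 (-2)).
  { apply ex_RInt_continuous. intros x Hx. rewrite Rmin_right, Rmax_left in Hx by lra. apply Hfc, Hx. }
  assert (Hh : ex_RInt (V:=C_R_CompleteNormedModule) h 0 PI).
  { apply ex_RInt_continuous. intros t _. apply continuous_semicircle_cos_integrand, Hz. }
  assert (Hcomp : RInt (V:=C_R_CompleteNormedModule) (fun t => scal (-2 * sin t) (f (2 * cos t))) 0 PI
                  = RInt (V:=C_R_CompleteNormedModule) f (2 * cos 0) (2 * cos PI)).
  { apply (RInt_comp (V:=C_R_CompleteNormedModule) f (fun t => 2 * cos t) (fun t => -2 * sin t)).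
    - intros t _. apply Hfc. pose proof (COS_bound t). lra.
    - intros t _. split.
      + eapply is_derive_eq; [apply is_derive_scal, is_derive_cos | ring].
      + apply (ex_derive_continuous (V:=R_NormedModule)). auto_derive. trivial. }
  replace (2 * cos 0) with 2 in Hcomp by (rewrite cos_0; ring).
  replace (2 * cos PI) with (-2) in Hcomp by (rewrite cos_PI; ring).
  assert (Hext : RInt (V:=C_R_CompleteNormedModule) (fun t => scal (-2 * sin t) (f (2 * cos t))) 0 PI
                 = opp (RInt (V:=C_R_CompleteNormedModule) h 0 PI)).
  { rewrite <- (RInt_opp _ _ _ Hh). apply RInt_ext. intros t Ht.
    rewrite Rmin_left, Rmax_right in Ht by (pose proof PI_RGT_0; lra).
    assert (Hs : 0 <= sin t) by (apply sin_ge_0; lra).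
    unfold f, h, Cdiv. rewrite scal_R_Cmult, rho_2_cos by exact Hs.
    generalize (/ (RtoC (2 * cos t) - z))%C. intros [u v].
    apply injective_projections; simpl; unfold opp; simpl; field; pose proof PI_RGT_0; lra. }
  unfold m0, CRInt. fold f.
  rewrite <- (opp_RInt_swap _ _ _ Hf), <- Hcomp, Hext.
  apply opp_opp.
Qed.

Lemma m0_eq_root (z m : C) : off_cut z -> is_m0_root z m -> m0 z = m.
Proof.
  intros Hz Hm. rewrite (m0_cos_substitution z Hz). unfold CRInt.
  apply (is_RInt_unique (V:=C_R_CompleteNormedModule)), is_RInt_semicircle_cos; assumption.
Qed.

Lemma Cmod_sq (c : C) : Cmod c ^ 2 = fst c ^ 2 + snd c ^ 2.
Proof. unfold Cmod. rewrite pow2_sqrt; [reflexivity | nra]. Qed.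

Lemma Cmod_lt_1_sq (c : C) : Cmod c < 1 -> fst c ^ 2 + snd c ^ 2 < 1.
Proof. intros H. rewrite <- Cmod_sq. pose proof (Cmod_ge_0 c). nra. Qed.

Lemma Csqrt_exists (w : C) : exists s : C, (s * s = w)%C.
Proof.
  destruct w as [a b].
  set (r := sqrt (a ^ 2 + b ^ 2)).
  assert (Hr : r * r = a ^ 2 + b ^ 2) by (apply sqrt_sqrt; nra).
  assert (Hra : Rabs a <= r).
  { unfold r. rewrite <- sqrt_Rsqr_abs. apply sqrt_le_1_alt. unfold Rsqr. nra. }
  apply Rabs_le_between in Hra.
  set (s1 := sqrt ((r + a) / 2)). set (s2 := sqrt ((r - a) / 2)).
  assert (e1 : s1 * s1 = (r + a) / 2) by (apply sqrt_sqrt; lra).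
  assert (e2 : s2 * s2 = (r - a) / 2) by (apply sqrt_sqrt; lra).
  assert (e3 : s1 * s2 = Rabs b / 2).
  { unfold s1, s2. rewrite <- sqrt_mult_alt by lra.
    replace ((r + a) / 2 * ((r - a) / 2)) with ((Rabs b / 2) ^ 2).
    - apply sqrt_pow2. pose proof (Rabs_pos b). lra.
    - replace ((Rabs b / 2) ^ 2) with (Rabs b ^ 2 / 4) by field. rewrite pow2_abs. nra. }
  destruct (Rle_dec 0 b) as [hb|hb].
  - exists (s1, s2). rewrite Rabs_right in e3 by lra.
    apply injective_projections; simpl; lra.
  - exists (s1, - s2). rewrite Rabs_left in e3 by lra.
    apply injective_projections; simpl; lra.
Qed.

(** The two roots of [m^2 + z m + 1] have product 1, and both have modulus 1 only if they are
    conjugate, i.e. only if [z] is real and lies in [-2, 2]. *)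
Lemma is_m0_root_exists (z : C) : off_cut z -> exists m, is_m0_root z m.
Proof.
  intros Hz.
  destruct (Csqrt_exists (z * z - 4)%C) as [s Hs].
  assert (H2 : RtoC 2 <> 0%C) by (intros h; injection h; lra).
  set (m1 := ((- z + s) / 2)%C). set (m2 := ((- z - s) / 2)%C).
  assert (E1 : (m1 * m1 + z * m1 + 1 = 0)%C).
  { unfold m1. transitivity ((s * s - (z * z - 4)) / 4)%C; [field; auto|]. rewrite Hs. field; auto. }
  assert (E2 : (m2 * m2 + z * m2 + 1 = 0)%C).
  { unfold m2. transitivity ((s * s - (z * z - 4)) / 4)%C; [field; auto|]. rewrite Hs. field; auto. }
  assert (P : (m1 * m2 = 1)%C).
  { unfold m1, m2. transitivity (((z * z - 4) - s * s) / 4 + 1)%C; [field; auto|]. rewrite Hs. field; auto. }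
  assert (Ez : z = (- (m1 + m2))%C) by (unfold m1, m2; field; auto).
  assert (PM : Cmod m1 * Cmod m2 = 1) by (rewrite <- Cmod_mult, P; apply Cmod_1).
  pose proof (Cmod_ge_0 m1). pose proof (Cmod_ge_0 m2).
  destruct (Rtotal_order (Cmod m1) 1) as [h|[h|h]].
  - exists m1; split; assumption.
  - exfalso.
    assert (c1 : fst m1 ^ 2 + snd m1 ^ 2 = 1) by (rewrite <- Cmod_sq, h; ring).
    assert (c2 : fst m2 ^ 2 + snd m2 ^ 2 = 1) by (rewrite <- Cmod_sq; replace (Cmod m2) with 1 by nra; ring).
    clearbody m1 m2. destruct m1 as [a b], m2 as [c d]. cbn [fst snd] in *.
    assert (P1 : a * c - b * d = 1) by (injection P; intros; lra).
    assert (P2 : a * d + b * c = 0) by (injection P; intros; lra).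
    assert (c - a = a * (a * c - b * d - 1) + b * (a * d + b * c) + c * (1 - (a ^ 2 + b ^ 2)))
      as Hc by ring.
    assert (d + b = - b * (a * c - b * d - 1) + a * (a * d + b * c) + d * (1 - (a ^ 2 + b ^ 2)))
      as Hd by ring.
    rewrite P1, P2, c1 in Hc, Hd.
    replace c with a in * by lra. replace d with (- b) in * by lra.
    rewrite Ez in Hz. destruct Hz as [Hz|Hz]; simpl in Hz.
    + apply Hz. ring.
    + replace (- (a + a)) with (-2 * a) in Hz by ring.
      rewrite Rabs_mult, Rabs_left in Hz by lra.
      assert (Rabs a <= 1) by (apply Rabs_le; nra). lra.
  - exists m2. split; [exact E2|].
    replace (Cmod m2) with (/ Cmod m1) by (field_simplify_eq; lra).
    rewrite <- Rinv_1. apply Rinv_lt_contravar; lra.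
Qed.

Lemma is_m0_root_m0 (z : C) : off_cut z -> is_m0_root z (m0 z).
Proof.
  intros Hz. destruct (is_m0_root_exists z Hz) as [m Hm].
  now rewrite (m0_eq_root z m Hz Hm).
Qed.

Lemma quadratic_root_parts (z m : C) : (m * m + z * m + 1 = 0)%C ->
  fst m * fst m - snd m * snd m + fst z * fst m - snd z * snd m + 1 = 0 /\
  2 * fst m * snd m + fst z * snd m + snd z * fst m = 0.
Proof.
  intros H. split.
  - transitivity (fst (m * m + z * m + 1)%C); [simpl; ring|]. now rewrite H.
  - transitivity (snd (m * m + z * m + 1)%C); [simpl; ring|]. now rewrite H.
Qed.

Lemma is_m0_root_conj (z m : C) : is_m0_root z m -> is_m0_root (Cconj z) (Cconj m).
Proof.
  intros [E L]. split; [|rewrite Cmod_conj; exact L].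
  destruct (quadratic_root_parts _ _ E) as [e1 e2].
  apply injective_projections; simpl; lra.
Qed.

(** [Im m (1 - |m|^2) = Im z |m|^2], from the imaginary part of [m + z + 1/m = 0]. *)
Lemma is_m0_root_Im_pos (z m : C) : is_m0_root z m -> 0 < snd z -> 0 < snd m.
Proof.
  intros [E L] Hy.
  destruct (quadratic_root_parts _ _ E) as [e1 e2].
  pose proof (quadratic_root_neq_0 _ _ E) as Hn.
  apply Cmod_lt_1_sq in L.
  assert (npos : 0 < fst m ^ 2 + snd m ^ 2).
  { rewrite <- Cmod_sq. apply pow_lt, Cmod_gt_0, Hn. }
  destruct m as [a b], z as [x y]. cbn [fst snd] in *.
  assert (e : b * (1 - (a ^ 2 + b ^ 2)) = y * (a ^ 2 + b ^ 2)).
  { transitivity (b * (1 - (a ^ 2 + b ^ 2)) + (- b * (a * a - b * b + x * a - y * b + 1)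
                   + a * (2 * a * b + x * b + y * a))); [rewrite e1, e2; ring | ring]. }
  assert (0 < y * (a ^ 2 + b ^ 2)) by (apply Rmult_lt_0_compat; lra).
  destruct (Rle_lt_dec b 0) as [hb|hb]; [|exact hb].
  exfalso. nra.
Qed.

Lemma is_m0_root_lipschitz (z z' m m' : C) : is_m0_root z m -> is_m0_root z' m' ->
  Cmod (m' - m) * (/ Cmod m - 1) <= Cmod (z' - z).
Proof.
  intros [E1 L1] [E2 L2].
  pose proof (quadratic_root_neq_0 _ _ E1) as Hm0.
  assert (Hid : ((m' - m) * (m' - / m) = - ((z' - z) * m'))%C).
  { transitivity ((m' * m' + z' * m' + 1) - (m' / m) * (m * m + z * m + 1) - (z' - z) * m')%C.
    - field; auto.
    - rewrite E1, E2. ring. }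
  assert (E : Cmod (m' - m) * Cmod (m' - / m) = Cmod (z' - z) * Cmod m')
    by (rewrite <- !Cmod_mult, Hid, Cmod_opp; reflexivity).
  assert (T : / Cmod m - Cmod m' <= Cmod (m' - / m)).
  { rewrite <- Cmod_inv by exact Hm0.
    replace (m' - / m)%C with (- (/ m - m'))%C by ring. rewrite Cmod_opp.
    pose proof (Cmod_triangle (/ m - m') m') as T. replace (/ m - m' + m')%C with (/ m)%C in T by ring.
    lra. }
  pose proof (Cmod_ge_0 (m' - m)). pose proof (Cmod_ge_0 (z' - z)).
  apply Rle_trans with (Cmod (m' - m) * Cmod (m' - / m)); [apply Rmult_le_compat_l; lra|].
  rewrite E. rewrite <- (Rmult_1_r (Cmod (z' - z))) at 2.
  apply Rmult_le_compat_l; lra.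
Qed.

(** Unlike [is_m0_root_lipschitz], this bound does not degenerate as [|m| -> 1], i.e. at the cut. *)
Lemma quadratic_roots_dist_sq_le (z z' m m' : C) :
  (m * m + z * m + 1 = 0)%C -> (m' * m' + z' * m' + 1 = 0)%C ->
  Cmod m <= 1 -> Cmod m' <= 1 -> 0 <= snd m -> 0 <= snd m' ->
  Cmod (m - m') ^ 2 <= Cmod (z - z').
Proof.
  intros E1 E2 L1 L2 P1 P2.
  assert (Hid : ((m - m') * (m * m' - 1) = - ((z - z') * (m * m')))%C).
  { transitivity (m' * (m * m + z * m + 1) - m * (m' * m' + z' * m' + 1) - (z - z') * (m * m'))%C.
    - ring.
    - rewrite E1, E2. ring. }
  assert (E : Cmod (m - m') * Cmod (m * m' - 1) = Cmod (z - z') * (Cmod m * Cmod m'))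
    by (rewrite <- !Cmod_mult, Hid, Cmod_opp; reflexivity).
  assert (Hle : Cmod (m - m') ^ 2 <= Cmod (m * m' - 1) ^ 2).
  { rewrite !Cmod_sq.
    assert (n1 : fst m ^ 2 + snd m ^ 2 <= 1) by (rewrite <- Cmod_sq; pose proof (Cmod_ge_0 m); nra).
    assert (n2 : fst m' ^ 2 + snd m' ^ 2 <= 1) by (rewrite <- Cmod_sq; pose proof (Cmod_ge_0 m'); nra).
    destruct m as [a b], m' as [c d]. cbn [fst snd] in *.
    assert (0 <= (1 - (a ^ 2 + b ^ 2)) * (1 - (c ^ 2 + d ^ 2))) by (apply Rmult_le_pos; lra).
    assert (0 <= b * d) by (apply Rmult_le_pos; lra).
    assert ((a * c - b * d - 1) ^ 2 + (a * d + b * c) ^ 2 - ((a - c) ^ 2 + (b - d) ^ 2)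
            = (1 - (a ^ 2 + b ^ 2)) * (1 - (c ^ 2 + d ^ 2)) + 4 * (b * d)) by ring.
    simpl. lra. }
  pose proof (Cmod_ge_0 (m - m')). pose proof (Cmod_ge_0 (m * m' - 1)). pose proof (Cmod_ge_0 (z - z')).
  pose proof (Cmod_ge_0 m). pose proof (Cmod_ge_0 m').
  assert (Cmod m * Cmod m' <= 1) by nra.
  assert (Cmod (m - m') <= Cmod (m * m' - 1)) by nra.
  apply Rle_trans with (Cmod (m - m') * Cmod (m * m' - 1)); [nra|].
  rewrite E. nra.
Qed.

(** * Continuity of [m0] off the cut *)

Lemma off_cut_open (z0 : C) : off_cut z0 -> exists r, 0 < r /\ forall z, Cmod (z - z0) < r -> off_cut z.
Proof.
  intros [H|H].
  - exists (Rabs (snd z0)). split; [apply Rabs_pos_lt, H|].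
    intros z Hz. left. intros E.
    pose proof (snd_le_Cmod (z - z0)) as T. simpl in T.
    rewrite E, Rplus_0_l, Rabs_Ropp in T. lra.
  - exists (Rabs (fst z0) - 2). split; [lra|].
    intros z Hz. right.
    pose proof (fst_le_Cmod (z - z0)) as T. simpl in T.
    pose proof (Rabs_triang_inv (fst z0) (fst z0 - fst z)) as T'.
    replace (fst z0 - (fst z0 - fst z)) with (fst z) in T' by ring.
    rewrite Rabs_minus_sym in T'. unfold Rminus in T'. lra.
Qed.

Lemma m0_continuous_on_line (p d : C) t0 : off_cut (p + RtoC t0 * d)%C ->
  Ccontinuous (fun t => m0 (p + RtoC t * d)%C) t0.
Proof.
  set (z0 := (p + RtoC t0 * d)%C). intros Hz0.
  destruct (off_cut_open z0 Hz0) as [r [Hr Hopen]].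
  assert (Hdist : forall t, Cmod ((p + RtoC t * d) - z0)%C = Rabs (t - t0) * Cmod d).
  { intros t. unfold z0. replace (p + RtoC t * d - (p + RtoC t0 * d))%C with (RtoC (t - t0) * d)%C
      by (apply injective_projections; simpl; ring).
    rewrite Cmod_mult, Cmod_R. reflexivity. }
  pose proof (is_m0_root_m0 z0 Hz0) as Hm.
  set (k := / Cmod (m0 z0) - 1).
  assert (Hk : 0 < k).
  { destruct Hm as [Em Lm]. pose proof (quadratic_root_neq_0 _ _ Em) as Hm0.
    apply Cmod_gt_0 in Hm0. unfold k. rewrite <- Rinv_1 at 1.
    enough (/ 1 < / Cmod (m0 z0)) by lra. apply Rinv_lt_contravar; lra. }
  pose proof (Cmod_ge_0 d) as Hd.
  apply continuous_C_epsilon_delta. intros eps Heps.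
  exists (Rmin r (eps * k) / (Cmod d + 1)). split.
  { apply Rdiv_lt_0_compat; [apply Rmin_pos; nra | lra]. }
  intros t Ht.
  assert (Ht' : Rabs (t - t0) * (Cmod d + 1) < Rmin r (eps * k)).
  { apply (Rmult_lt_reg_r (/ (Cmod d + 1))); [apply Rinv_0_lt_compat; lra|].
    rewrite Rmult_assoc, Rinv_r, Rmult_1_r by lra. exact Ht. }
  pose proof (Rmin_l r (eps * k)). pose proof (Rmin_r r (eps * k)). pose proof (Rabs_pos (t - t0)).
  assert (Hz : off_cut (p + RtoC t * d)%C) by (apply Hopen; rewrite Hdist; nra).
  pose proof (is_m0_root_lipschitz _ _ _ _ Hm (is_m0_root_m0 _ Hz)) as L.
  fold k in L. rewrite Hdist in L.
  fold z0. apply (Rmult_lt_reg_r k); [exact Hk|]. lra.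
Qed.

Lemma integrand_continuous_on_line (eta : R) (p d : C) t0 :
  off_cut (p + RtoC t0 * d)%C -> off_cut (p + Ci * RtoC eta + RtoC t0 * d)%C ->
  Ccontinuous (fun t => integrand eta (p + RtoC t * d) * d)%C t0.
Proof.
  intros H1 H2. unfold integrand.
  eapply (continuous_ext (T:=R_UniformSpace) (U:=C_UniformSpace)
    (fun t => m0 (p + RtoC t * d) * m0 ((p + Ci * RtoC eta) + RtoC t * d)
       * (m0 ((p + Ci * RtoC eta) + RtoC t * d) - m0 (p + RtoC t * d)) * d)%C).
  { intros t. now replace (p + Ci * RtoC eta + RtoC t * d)%C with (p + RtoC t * d + Ci * RtoC eta)%C by ring. }
  pose proof (m0_continuous_on_line _ _ _ H1). pose proof (m0_continuous_on_line _ _ _ H2).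
  apply continuous_Cmult; [|apply continuous_const].
  apply continuous_Cmult; [apply continuous_Cmult|apply continuous_Cminus]; assumption.
Qed.

(** * Bounds on the integrand *)

(** Boundary value [m0 (x + i0)]: the root of [m^2 + x m + 1] in the closed upper half disk. *)
Definition m0_boundary (x : R) : C :=
  if Rle_dec (Rabs x) 2 then ((- x / 2, sqrt (4 - x ^ 2) / 2) : C)
  else if Rlt_dec 0 x then (((- x + sqrt (x ^ 2 - 4)) / 2, 0) : C)
  else (((- x - sqrt (x ^ 2 - 4)) / 2, 0) : C).

Lemma m0_boundary_spec (x : R) :
  let b := m0_boundary x in
  (b * b + RtoC x * b + 1 = 0)%C /\ Cmod b <= 1 /\ 0 <= snd b /\
  snd b * (fst b ^ 2 + snd b ^ 2) = sqrt (4 - x ^ 2) / 2.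
Proof.
  unfold m0_boundary. destruct (Rle_dec (Rabs x) 2) as [h|h].
  - apply Rabs_le_between in h.
    assert (h4 : 0 <= 4 - x ^ 2) by nra.
    pose proof (sqrt_sqrt _ h4) as hs. pose proof (sqrt_pos (4 - x ^ 2)).
    set (s := sqrt (4 - x ^ 2)) in *.
    assert (n : (- x / 2) ^ 2 + (s / 2) ^ 2 = 1) by nra.
    repeat split.
    + apply injective_projections; simpl; [nra | field].
    + unfold Cmod; cbn [fst snd]. rewrite n, sqrt_1. lra.
    + simpl. lra.
    + cbn [fst snd]. rewrite n. ring.
  - assert (hx : 2 < Rabs x) by lra.
    assert (h4 : 0 <= x ^ 2 - 4) by (unfold Rabs in hx; destruct (Rcase_abs x); nra).
    pose proof (sqrt_sqrt _ h4) as hs. pose proof (sqrt_pos (x ^ 2 - 4)).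
    set (u := sqrt (x ^ 2 - 4)) in *.
    rewrite (sqrt_neg_0 (4 - x ^ 2)) by lra.
    destruct (Rlt_dec 0 x) as [p|p].
    + rewrite Rabs_right in hx by lra.
      assert (u < x) by nra. assert (x - 2 <= u) by nra.
      repeat split.
      * apply injective_projections; simpl; [nra | field].
      * unfold Cmod; cbn [fst snd]. rewrite <- sqrt_1. apply sqrt_le_1_alt. nra.
      * simpl; lra.
      * simpl; field.
    + rewrite Rabs_left1 in hx by lra.
      assert (u < - x) by nra. assert (- x - 2 <= u) by nra.
      repeat split.
      * apply injective_projections; simpl; [nra | field].
      * unfold Cmod; cbn [fst snd]. rewrite <- sqrt_1. apply sqrt_le_1_alt. nra.
      * simpl; lra.
      * simpl; field.
Qed.

Lemma Cmod_Ci_mult (e : R) : 0 <= e -> Cmod (Ci * RtoC e)%C = e.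
Proof. intros H. rewrite Cmod_mult, Cmod_Ci, Cmod_R, Rabs_pos_eq by exact H. ring. Qed.

Lemma Im_Cmod_sq_lipschitz (p b : C) : Cmod p <= 1 -> Cmod b <= 1 ->
  Rabs (snd p * (fst p ^ 2 + snd p ^ 2) - snd b * (fst b ^ 2 + snd b ^ 2)) <= 3 * Cmod (p - b).
Proof.
  intros Hp Hb. rewrite <- !Cmod_sq.
  set (P := Cmod p) in *. set (B := Cmod b) in *. set (D := Cmod (p - b)).
  assert (h1 : Rabs (snd p - snd b) <= D).
  { unfold D. replace (snd p - snd b) with (snd (p - b)%C) by (simpl; ring). apply snd_le_Cmod. }
  assert (h2 : Rabs (snd b) <= B) by apply snd_le_Cmod.
  assert (h3 : Rabs (P - B) <= D).
  { unfold P, B, D. pose proof (Cmod_triangle (p - b) b) as T1. pose proof (Cmod_triangle (b - p) p) as T2.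
    replace (p - b + b)%C with p in T1 by ring. replace (b - p + p)%C with b in T2 by ring.
    rewrite <- (Cmod_opp (b - p)) in T2. replace (- (b - p))%C with (p - b)%C in T2 by ring.
    apply Rabs_le. split; lra. }
  assert (P0 : 0 <= P) by apply Cmod_ge_0. assert (B0 : 0 <= B) by apply Cmod_ge_0.
  replace (snd p * P ^ 2 - snd b * B ^ 2) with ((snd p - snd b) * (P * P) + snd b * (P - B) * (P + B)) by ring.
  eapply Rle_trans; [apply Rabs_triang|]. rewrite !Rabs_mult, (Rabs_pos_eq P), (Rabs_pos_eq (P + B)) by lra.
  pose proof (Rabs_pos (snd p - snd b)). pose proof (Rabs_pos (snd b)). pose proof (Rabs_pos (P - B)).
  assert (T1 : Rabs (snd p - snd b) * (P * P) <= D * 1) by (apply Rmult_le_compat; nra).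
  assert (T2 : Rabs (snd b) * Rabs (P - B) <= 1 * D) by (apply Rmult_le_compat; lra).
  assert (T3 : Rabs (snd b) * Rabs (P - B) * (P + B) <= D * 2) by (apply Rmult_le_compat; nra).
  lra.
Qed.

Lemma Cmod_integrand_le (eta : R) (z : C) : off_cut z -> off_cut (z + Ci * RtoC eta)%C ->
  Cmod (integrand eta z) <= 2.
Proof.
  intros H1 H2. unfold integrand.
  destruct (is_m0_root_m0 _ H1) as [_ L1], (is_m0_root_m0 _ H2) as [_ L2].
  set (a := m0 z) in *. set (b := m0 (z + Ci * RtoC eta)%C) in *.
  rewrite !Cmod_mult.
  assert (Cmod (b - a) <= 2).
  { pose proof (Cmod_triangle b (- a)) as T. rewrite Cmod_opp in T. unfold Cminus. lra. }
  pose proof (Cmod_ge_0 a). pose proof (Cmod_ge_0 b). pose proof (Cmod_ge_0 (b - a)).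
  assert (Cmod a * Cmod b <= 1) by nra.
  nra.
Qed.

Lemma Cmod_integrand_upper_le (eta : R) (z : C) : 0 < eta -> 0 < snd z ->
  Cmod (integrand eta z) <= sqrt eta.
Proof.
  intros He Hz.
  assert (N2 : 0 < snd (z + Ci * RtoC eta)%C) by (simpl; lra).
  pose proof (is_m0_root_m0 z (or_introl (Rgt_not_eq _ _ Hz))) as M1.
  pose proof (is_m0_root_m0 _ (or_introl (Rgt_not_eq _ _ N2))) as M2.
  pose proof (is_m0_root_Im_pos _ _ M1 Hz) as U1.
  pose proof (is_m0_root_Im_pos _ _ M2 N2) as U2.
  destruct M1 as [E1 L1], M2 as [E2 L2].
  unfold integrand.
  set (a := m0 z) in *. set (b := m0 (z + Ci * RtoC eta)%C) in *.
  pose proof (quadratic_roots_dist_sq_le _ _ _ _ E2 E1 ltac:(lra) ltac:(lra) ltac:(lra) ltac:(lra)) as Hh.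
  replace (z + Ci * RtoC eta - z)%C with (Ci * RtoC eta)%C in Hh by ring.
  rewrite Cmod_Ci_mult in Hh by lra.
  assert (Hba : Cmod (b - a) <= sqrt eta).
  { rewrite <- (sqrt_pow2 (Cmod (b - a))) by apply Cmod_ge_0. apply sqrt_le_1_alt, Hh. }
  rewrite !Cmod_mult.
  pose proof (Cmod_ge_0 a). pose proof (Cmod_ge_0 b). pose proof (Cmod_ge_0 (b - a)).
  assert (Cmod a * Cmod b <= 1) by nra.
  nra.
Qed.

(** On the lower side [z + i eta = conj z], so the integrand is [2 i |m|^2 Im m]. *)
Lemma integrand_lower_Im_approx (eta x : R) : 0 < eta ->
  Rabs (snd (integrand eta ((x, (- (eta / 2))%R) : C) * RtoC 6)%C - 6 * sqrt (4 - x ^ 2)) <= 36 * sqrt eta.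
Proof.
  intros He.
  set (z := ((x, eta / 2) : C)).
  assert (Hz : off_cut z) by (left; simpl; lra).
  assert (Hzc : off_cut (Cconj z)) by (left; simpl; lra).
  pose proof (is_m0_root_m0 z Hz) as M.
  assert (Ec : m0 (Cconj z) = Cconj (m0 z)).
  { apply (m0_eq_root _ _ Hzc), is_m0_root_conj, M. }
  unfold integrand.
  replace ((x, (- (eta / 2))%R) : C) with (Cconj z) by reflexivity.
  replace (Cconj z + Ci * RtoC eta)%C with z by (unfold z; apply injective_projections; simpl; field).
  rewrite Ec.
  pose proof (is_m0_root_Im_pos _ _ M ltac:(simpl; lra)) as U.
  destruct M as [E L].
  destruct (m0_boundary_spec x) as [Eb [Lb [Ib Vb]]].
  set (p := m0 z) in *. set (b := m0_boundary x) in *.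
  pose proof (quadratic_roots_dist_sq_le _ _ _ _ E Eb ltac:(lra) Lb ltac:(lra) Ib) as Hh.
  replace (z - RtoC x)%C with (Ci * RtoC (eta / 2))%C in Hh
    by (unfold z; apply injective_projections; simpl; field).
  rewrite Cmod_Ci_mult in Hh by lra.
  assert (Hpb : Cmod (p - b) <= sqrt eta).
  { rewrite <- (sqrt_pow2 (Cmod (p - b))) by apply Cmod_ge_0. apply sqrt_le_1_alt. lra. }
  pose proof (Im_Cmod_sq_lipschitz p b ltac:(lra) Lb) as PL.
  rewrite Vb in PL.
  replace (snd (Cconj p * p * (p - Cconj p) * RtoC 6)%C - 6 * sqrt (4 - x ^ 2))
    with (12 * (snd p * (fst p ^ 2 + snd p ^ 2) - sqrt (4 - x ^ 2) / 2))
    by (destruct p; simpl; field).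
  rewrite Rabs_mult, (Rabs_pos_eq 12) by lra.
  lra.
Qed.

(** * The contour integral *)

Lemma RInt_4_sin_sq : RInt (fun t => 4 * sin t ^ 2) 0 PI = 2 * PI.
Proof.
  assert (H : is_RInt (fun t => 4 * sin t ^ 2) 0 PI
                (minus (2 * PI - 2 * sin PI * cos PI) (2 * 0 - 2 * sin 0 * cos 0))).
  { apply (is_RInt_derive (V:=R_CompleteNormedModule) (fun t => 2 * t - 2 * sin t * cos t)); intros x _.
    - auto_derive; [trivial|]. pose proof (cos_sq_add_sin_sq x). nra.
    - apply (ex_derive_continuous (V:=R_NormedModule)). auto_derive. trivial. }
  rewrite (is_RInt_unique _ _ _ _ H). rewrite sin_PI, sin_0.
  unfold minus, plus, opp; simpl. ring.
Qed.

Lemma continuous_sqrt_4_minus_sq x : continuous (fun y => sqrt (4 - y ^ 2)) x.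
Proof. apply continuous_sqrt_comp, (ex_derive_continuous (V:=R_NormedModule)). auto_derive. trivial. Qed.

(** [sqrt] is 0 on negative arguments, so only [-2, 2] contributes. *)
Lemma RInt_sqrt_4_minus_sq : RInt (fun x => sqrt (4 - x ^ 2)) (-3) 3 = 2 * PI.
Proof.
  set (f := fun x => sqrt (4 - x ^ 2)).
  assert (Hf : forall a b, ex_RInt f a b).
  { intros a b. apply (ex_RInt_continuous (V:=R_CompleteNormedModule)). intros x _.
    apply continuous_sqrt_4_minus_sq. }
  assert (Hout : forall a b, a <= b -> (forall x, a <= x <= b -> 4 <= x ^ 2) -> RInt f a b = 0).
  { intros a b Hab Hx. rewrite (RInt_ext f (fun _ => 0)); [rewrite RInt_const; apply Rmult_0_r|].
    intros x Hx'. rewrite Rmin_left, Rmax_right in Hx' by lra.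
    apply sqrt_neg_0. specialize (Hx x ltac:(lra)). lra. }
  assert (Hcomp : RInt (fun t => scal (2 * sin t) (f (-2 * cos t))) 0 PI = RInt f (-2 * cos 0) (-2 * cos PI)).
  { apply (RInt_comp (V:=R_CompleteNormedModule) f (fun t => -2 * cos t) (fun t => 2 * sin t)).
    - intros t _. apply continuous_sqrt_4_minus_sq.
    - intros t _. split.
      + eapply is_derive_eq; [apply is_derive_scal, is_derive_cos | ring].
      + apply (ex_derive_continuous (V:=R_NormedModule)). auto_derive. trivial. }
  replace (-2 * cos 0) with (-2) in Hcomp by (rewrite cos_0; ring).
  replace (-2 * cos PI) with 2 in Hcomp by (rewrite cos_PI; ring).
  assert (Hmid : RInt f (-2) 2 = 2 * PI).
  { rewrite <- Hcomp, <- RInt_4_sin_sq. apply RInt_ext. intros t Ht.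
    rewrite Rmin_left, Rmax_right in Ht by (pose proof PI_RGT_0; lra).
    assert (0 < sin t) by (apply sin_gt_0; lra).
    unfold f, scal; simpl; unfold mult; simpl.
    replace (4 - (-2 * cos t) * ((-2 * cos t) * 1)) with ((2 * sin t) ^ 2)
      by (pose proof (cos_sq_add_sin_sq t); nra).
    rewrite sqrt_pow2 by lra. ring. }
  rewrite <- (RInt_Chasles f (-3) (-2) 3), <- (RInt_Chasles f (-2) 2 3) by apply Hf.
  rewrite (Hout (-3) (-2)), (Hout 2 3), Hmid by (lra || (intros; nra)).
  unfold plus; simpl. ring.
Qed.

Lemma Im_seg_integral_approx (f : C -> C) (p q : C) (g : R -> R) (c : R) :
  (forall t, 0 <= t <= 1 -> Ccontinuous (fun s => f (p + RtoC s * (q - p)) * (q - p))%C t) ->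
  ex_RInt g 0 1 ->
  (forall t, 0 <= t <= 1 -> Rabs (snd (f (p + RtoC t * (q - p)) * (q - p))%C - g t) <= c) ->
  Rabs (Im (seg_integral f p q) - RInt g 0 1) <= c.
Proof.
  intros Hcont Hg Hbound.
  set (h := fun t => (f (p + RtoC t * (q - p)) * (q - p))%C).
  assert (Hh : ex_RInt (V:=C_R_CompleteNormedModule) h 0 1).
  { apply ex_RInt_continuous. intros t Ht. rewrite Rmin_left, Rmax_right in Ht by lra. apply Hcont, Ht. }
  destruct Hh as [l Hl].
  pose proof (is_RInt_fct_extend_snd (U:=R_NormedModule) (V:=R_NormedModule) _ _ _ _ Hl) as Him.
  unfold seg_integral, CRInt. fold h. rewrite (is_RInt_unique (V:=C_R_CompleteNormedModule) _ _ _ _ Hl).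
  replace (Im l) with (RInt (fun t => snd (h t)) 0 1) by exact (is_RInt_unique _ _ _ _ Him).
  rewrite <- (RInt_minus (V:=R_CompleteNormedModule)) by first [exact Hg | eexists; exact Him].
  replace c with ((1 - 0) * c) by ring.
  apply abs_RInt_le_const; [lra | | exact Hbound].
  apply (ex_RInt_minus (V:=R_NormedModule)); [eexists; exact Him | exact Hg].
Qed.

Lemma Im_seg_integral_le (f : C -> C) (p q : C) (c : R) :
  (forall t, 0 <= t <= 1 -> Ccontinuous (fun s => f (p + RtoC s * (q - p)) * (q - p))%C t) ->
  (forall t, 0 <= t <= 1 -> Cmod (f (p + RtoC t * (q - p))%C) * Cmod (q - p)%C <= c) ->
  Rabs (Im (seg_integral f p q)) <= c.
Proof.
  intros Hcont Hbound.
  pose proof (Im_seg_integral_approx f p q (fun _ => 0) c Hcont (ex_RInt_const _ _ _)) as H.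
  rewrite RInt_const in H. change (scal (1 - 0) 0) with ((1 - 0) * 0) in H.
  rewrite Rmult_0_r, Rminus_0_r in H. apply H.
  intros t Ht. rewrite Rminus_0_r. eapply Rle_trans; [apply snd_le_Cmod|].
  rewrite Cmod_mult. apply Hbound, Ht.
Qed.

Lemma off_cut_of_Re (z : C) (x : R) : fst z = x -> 2 < Rabs x -> off_cut z.
Proof. intros <- H. now right. Qed.

Lemma off_cut_of_Im (z : C) (y : R) : snd z = y -> y <> 0 -> off_cut z.
Proof. intros <- H. now left. Qed.

(** The vertices are written with [- (3)], not the numeral [-3], so that they match the
    unfolding of [rect_integral] at [a = 3]. *)
Lemma Im_lower_side_approx (eta : R) : 0 < eta ->
  Rabs (Im (seg_integral (integrand eta) (RtoC (- (3)) - Ci * RtoC (eta / 2)) (RtoC 3 - Ci * RtoC (eta / 2)))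
        - 2 * PI) <= 36 * sqrt eta.
Proof.
  intros He.
  assert (Hex : ex_RInt (fun x => sqrt (4 - x ^ 2)) (6 * 0 + -3) (6 * 1 + -3)).
  { apply (ex_RInt_continuous (V:=R_CompleteNormedModule)). intros x _. apply continuous_sqrt_4_minus_sq. }
  assert (Hint : RInt (fun t => scal 6 (sqrt (4 - (6 * t + -3) ^ 2))) 0 1 = 2 * PI).
  { rewrite (RInt_comp_lin (fun x => sqrt (4 - x ^ 2))) by exact Hex.
    replace (6 * 0 + -3) with (-3) by ring. replace (6 * 1 + -3) with 3 by ring.
    apply RInt_sqrt_4_minus_sq. }
  rewrite <- Hint.
  apply Im_seg_integral_approx.
  - intros t _. apply integrand_continuous_on_line.
    + apply (off_cut_of_Im _ (- (eta / 2))); [simpl; ring | lra].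
    + apply (off_cut_of_Im _ (eta / 2)); [simpl; field | lra].
  - apply (ex_RInt_comp_lin (V:=R_NormedModule) (fun x => sqrt (4 - x ^ 2))), Hex.
  - intros t _.
    replace (RtoC (- (3)) - Ci * RtoC (eta / 2)
             + RtoC t * (RtoC 3 - Ci * RtoC (eta / 2) - (RtoC (- (3)) - Ci * RtoC (eta / 2))))%C
      with ((6 * t + -3, (- (eta / 2))%R) : C) by (apply injective_projections; simpl; ring).
    replace (RtoC 3 - Ci * RtoC (eta / 2) - (RtoC (- (3)) - Ci * RtoC (eta / 2)))%C with (RtoC 6)
      by (apply injective_projections; simpl; ring).
    unfold scal; simpl; unfold mult; simpl.
    apply integrand_lower_Im_approx, He.
Qed.

Lemma Im_right_side_le (eta : R) : 0 < eta ->
  Rabs (Im (seg_integral (integrand eta) (RtoC 3 - Ci * RtoC (eta / 2)) (RtoC 3 + Ci * RtoC (eta / 2))))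
  <= 2 * eta.
Proof.
  intros He.
  assert (Hcut : forall (z : C), fst z = 3 -> off_cut z)
    by (intros z Hz; apply (off_cut_of_Re z 3 Hz); rewrite Rabs_pos_eq; lra).
  apply Im_seg_integral_le.
  - intros t _. apply integrand_continuous_on_line; apply Hcut; simpl; ring.
  - intros t _.
    replace (RtoC 3 + Ci * RtoC (eta / 2) - (RtoC 3 - Ci * RtoC (eta / 2)))%C with (Ci * RtoC eta)%C
      by (apply injective_projections; simpl; field).
    rewrite Cmod_Ci_mult by lra. apply Rmult_le_compat_r; [lra|].
    apply Cmod_integrand_le; apply Hcut; simpl; field.
Qed.

Lemma Im_upper_side_le (eta : R) : 0 < eta ->
  Rabs (Im (seg_integral (integrand eta) (RtoC 3 + Ci * RtoC (eta / 2)) (RtoC (- (3)) + Ci * RtoC (eta / 2))))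
  <= 6 * sqrt eta.
Proof.
  intros He.
  apply Im_seg_integral_le.
  - intros t _. apply integrand_continuous_on_line.
    + apply (off_cut_of_Im _ (eta / 2)); [simpl; ring | lra].
    + apply (off_cut_of_Im _ (3 * (eta / 2))); [simpl; field | lra].
  - intros t _.
    replace (RtoC (- (3)) + Ci * RtoC (eta / 2) - (RtoC 3 + Ci * RtoC (eta / 2)))%C with (RtoC (-6))
      by (apply injective_projections; simpl; ring).
    rewrite Cmod_R, Rabs_left, Rmult_comm by lra. replace (- -6) with 6 by ring.
    apply Rmult_le_compat_l; [lra|].
    apply Cmod_integrand_upper_le; [exact He | simpl; lra].
Qed.

Lemma Im_left_side_le (eta : R) : 0 < eta ->
  Rabs (Im (seg_integral (integrand eta)
              (RtoC (- (3)) + Ci * RtoC (eta / 2)) (RtoC (- (3)) - Ci * RtoC (eta / 2))))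
  <= 2 * eta.
Proof.
  intros He.
  assert (Hcut : forall (z : C), fst z = -3 -> off_cut z)
    by (intros z Hz; apply (off_cut_of_Re z (-3) Hz); rewrite Rabs_left; lra).
  apply Im_seg_integral_le.
  - intros t _. apply integrand_continuous_on_line; apply Hcut; simpl; ring.
  - intros t _.
    replace (RtoC (- (3)) - Ci * RtoC (eta / 2) - (RtoC (- (3)) + Ci * RtoC (eta / 2)))%C
      with (- (Ci * RtoC eta))%C
      by (apply injective_projections; simpl; field).
    rewrite Cmod_opp, Cmod_Ci_mult by lra. apply Rmult_le_compat_r; [lra|].
    apply Cmod_integrand_le; apply Hcut; simpl; field.
Qed.

Lemma Im_rect_integral_approx (eta : R) : 0 < eta ->
  Rabs (Im (rect_integral (integrand eta) 3 (eta / 2)) - 2 * PI) <= 42 * sqrt eta + 4 * eta.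
Proof.
  intros He.
  pose proof (Im_lower_side_approx eta He) as H1. pose proof (Im_right_side_le eta He) as H2.
  pose proof (Im_upper_side_le eta He) as H3. pose proof (Im_left_side_le eta He) as H4.
  unfold rect_integral. rewrite !im_plus.
  apply Rabs_le_between in H1. apply Rabs_le_between in H2.
  apply Rabs_le_between in H3. apply Rabs_le_between in H4.
  apply Rabs_le. split; lra.
Qed.

Lemma filterlim_at_right_0_of_sqrt_bound (f : R -> R) (l c : R) :
  (forall eta, 0 < eta <= 1 -> Rabs (f eta - l) <= c * sqrt eta) ->
  filterlim f (at_right 0) (locally l).
Proof.
  intros H. apply filterlim_locally. intros eps.
  pose proof (cond_pos eps) as Heps.
  set (k := Rabs c + 1).
  assert (Hk : 0 < k) by (unfold k; pose proof (Rabs_pos c); lra).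
  set (delta := Rmin 1 ((eps / k) ^ 2)).
  assert (Hd : 0 < delta) by (apply Rmin_pos; [lra | apply pow_lt, Rdiv_lt_0_compat; lra]).
  exists (mkposreal delta Hd). intros y Hy Hpos.
  change (Rabs (y - 0) < delta) in Hy. rewrite Rminus_0_r, Rabs_pos_eq in Hy by lra.
  change (Rabs (f y - l) < eps).
  assert (Hs : sqrt y < eps / k).
  { rewrite <- (sqrt_pow2 (eps / k)) by (apply Rlt_le, Rdiv_lt_0_compat; lra).
    apply sqrt_lt_1_alt. split; [lra|]. eapply Rlt_le_trans; [exact Hy | apply Rmin_r]. }
  assert (Hy1 : y <= 1) by (pose proof (Rmin_l 1 ((eps / k) ^ 2)); unfold delta in Hy; lra).
  specialize (H y (conj Hpos Hy1)).
  pose proof (Rle_abs c). pose proof (sqrt_pos y).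
  apply (Rle_lt_trans _ (k * sqrt y)); [unfold k; nra|].
  apply (Rmult_lt_reg_r (/ k)); [apply Rinv_0_lt_compat, Hk|].
  replace (k * sqrt y * / k) with (sqrt y) by (field; lra). exact Hs.
Qed.

Theorem lemma5p5 :
  filterlim (fun eta : R => Im (rect_integral (integrand eta) 3 (eta / 2)))
    (at_right 0) (locally (2 * PI)).
Proof.
  apply (filterlim_at_right_0_of_sqrt_bound _ _ 46).
  intros eta [He He1].
  pose proof (Im_rect_integral_approx eta He) as H.
  assert (eta <= sqrt eta).
  { pose proof (sqrt_sqrt eta ltac:(lra)). pose proof (sqrt_pos eta).
    assert (sqrt eta <= 1) by (rewrite <- sqrt_1; apply sqrt_le_1_alt; lra). nra. }
  lra.
Qed.
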